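(* Let $\kappa\in[0,1)$. Define $S_{q,\kappa}$ as the supremum of $$S=\langle\psi|A_0\otimes B_{0,0}|\psi\rangle+\langle\psi|A_0\otimes B_{1,0}|\psi\rangle+\langle\psi|A_1\otimes B_{0,1}|\psi\rangle-\langle\psi|A_1\otimes B_{1,1}|\psi\rangle$$ over all finite-dimensional Hilbert spaces $H_A,H_B$, unit vectors $|\psi\rangle\in H_A\otimes H_B$, binary observables $A_0,A_1$ on $H_A$ and binary observables $B_{y,x}$ ($x,y\in\{0,1\}$) on $H_B$ satisfying $\|B_{y,0}-B_{y,1}\|\le2\kappa$ for $y\in\{0,1\}$ (operator norm). Then $$S_{q,\kappa}=\begin{cases}2\sqrt2\big(\kappa+\sqrt{1-\kappa^2}\big),&\kappa\in[0,\tfrac1{\sqrt2}],\\ 4,&\kappa\in[\tfrac1{\sqrt2},1).\end{cases}$$ This value is attained with $|\psi\rangle=\frac1{\sqrt2}(|00\rangle+|11\rangle)$, $A_0=\sigma_z$, $A_1=\sigma_x$ and: for $\kappa\in[0,1/\sqrt2]$, $B_{0,0}=\frac{-\kappa+\sqrt{1-\kappa^2}}{\sqrt2}\sigma_x+\frac{\kappa+\sqrt{1-\kappa^2}}{\sqrt2}\sigma_z$, $B_{0,1}=\frac{\kappa+\sqrt{1-\kappa^2}}{\sqrt2}\sigma_x+\frac{-\kappa+\sqrt{1-\kappa^2}}{\sqrt2}\sigma_z$, $B_{1,0}=\frac{\kappa-\sqrt{1-\kappa^2}}{\sqrt2}\sigma_x+\frac{\kappa+\sqrt{1-\kappa^2}}{\sqrt2}\sigma_z$,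 $B_{1,1}=\frac{-\kappa-\sqrt{1-\kappa^2}}{\sqrt2}\sigma_x+\frac{-\kappa+\sqrt{1-\kappa^2}}{\sqrt2}\sigma_z$; for $\kappa\in[1/\sqrt2,1)$, $B_{0,0}=B_{1,0}=\sigma_z$, $B_{0,1}=\sigma_x$, $B_{1,1}=-\sigma_x$.
   Context: A binary observable on a Hilbert space $H$ is an operator $O=\Pi^0-\Pi^1$ where $\{\Pi^0,\Pi^1\}$ is a two-outcome POVM on $H$ (equivalently a Hermitian $O$ with $-\mathbb 1\le O\le\mathbb 1$); outcome $0$ corresponds to $+1$. $B_{y,x}$ is Bob's observable for his input $y$ when Alice's input $x$ is leaked to him; the constraint $\|B_{y,0}-B_{y,1}\|\le 2\kappa$ expresses that at most $\kappa$ of Alice's input information leaks to Bob. $\sigma_x,\sigma_z$ are the Pauli matrices. *)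

(* R : rcfType, complex scalars C := R[i] (mathcomp-real-closed),
   Hilbert spaces C^m, tensor product = Kronecker product (mxtens). *)
From mathcomp Require Import all_boot all_order all_algebra.
From mathcomp Require Export complex mxtens.
Set Implicit Arguments. Unset Strict Implicit. Unset Printing Implicit Defensive.
Import Order.TTheory GRing.Theory Num.Theory.
Local Open Scope ring_scope.
Local Open Scope complex_scope.

Section QDefs.
Variable R : rcfType.
Local Notation C := R[i].

Definition adjmx {m n : nat} (M : 'M[C]_(m, n)) : 'M[C]_(n, m) :=
  (map_mx Num.conj M)^T.

Definition hermitian {n : nat} (M : 'M[C]_n) : Prop := adjmx M = M.

Definition psd {n : nat} (M : 'M[C]_n) : Prop :=
  hermitian M /\ forall v : 'cV[C]_n, 0 <= (adjmx v *m M *m v) 0 0.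

Definition binary_observable {n : nat} (O : 'M[C]_n) : Prop :=
  exists P0 P1 : 'M[C]_n, [/\ psd P0, psd P1, P0 + P1 = 1%:M & O = P0 - P1].

Definition vnorm {n : nat} (v : 'cV[C]_n) : R :=
  Num.sqrt (complex.Re ((adjmx v *m v) 0 0)).

Definition opnorm_le {n : nat} (M : 'M[C]_n) (c : R) : Prop :=
  forall v : 'cV[C]_n, vnorm (M *m v) <= c * vnorm v.

Definition unit_vector {n : nat} (v : 'cV[C]_n) : Prop :=
  (adjmx v *m v) 0 0 = 1.

Definition expect {n : nat} (psi : 'cV[C]_n) (X : 'M[C]_n) : C :=
  (adjmx psi *m X *m psi) 0 0.

(* The functional S.  Indices: B y x with y = Bob's input, x = leaked input of
   Alice; false encodes 0 and true encodes 1. *)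
Definition S_val {m n : nat} (psi : 'cV[C]_(m * n)) (A0 A1 : 'M[C]_m)
    (B : bool -> bool -> 'M[C]_n) : C :=
  expect psi (A0 *t B false false) + expect psi (A0 *t B true false)
  + expect psi (A1 *t B false true) - expect psi (A1 *t B true true).

Definition sigma_x : 'M[C]_2 := \matrix_(i, j) (i != j)%:R.
Definition sigma_z : 'M[C]_2 :=
  \matrix_(i, j) (if i == j then (if i == 0 then 1 else -1) else 0).

Definition ket (i : 'I_2) : 'cV[C]_2 := delta_mx i 0.

Definition phi_plus : 'cV[C]_(2 * 2) :=
  ((Num.sqrt 2)^-1)%:C *: (ket 0 *t ket 0 + ket 1 *t ket 1).

Definition S_q (k : R) : R :=
  if k <= (Num.sqrt 2)^-1
  then 2 * Num.sqrt 2 * (k + Num.sqrt (1 - k ^+ 2))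
  else 4.

Definition B_opt (k : R) (y x : bool) : 'M[C]_2 :=
  let s := Num.sqrt (1 - k ^+ 2) in
  let r := Num.sqrt 2 in
  if k <= r^-1 then
    match y, x with
    | false, false => ((- k + s) / r)%:C *: sigma_x + ((k + s) / r)%:C *: sigma_z
    | false, true  => ((k + s) / r)%:C *: sigma_x + ((- k + s) / r)%:C *: sigma_z
    | true, false  => ((k - s) / r)%:C *: sigma_x + ((k + s) / r)%:C *: sigma_z
    | true, true   => ((- k - s) / r)%:C *: sigma_x + ((- k + s) / r)%:C *: sigma_z
    end
  else
    match y, x with
    | _, false => sigma_z
    | false, true => sigma_x
    | true, true => - sigma_x
    end.

End QDefs.

From mathcomp Require Import all_boot all_order all_algebra.
From mathcomp Require Import complex mxtens.
From mathcomp Require Import ring lra.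
Import Order.TTheory GRing.Theory Num.Theory.
Local Open Scope ring_scope.
Local Open Scope complex_scope.

Set Implicit Arguments.
Unset Strict Implicit.

(** Put [a_x = (A_x (x) 1) psi] and [b_yx = (1 (x) B_yx) psi]: all have norm at most 1,
    [|b_y0 - b_y1| <= 2 k], and [S] is the real part of
    [<a_0, b_00 + b_10> + <a_1, b_01 - b_11>].  With [u = a_0 + a_1], [w = a_0 - a_1],
    [P_y = |b_y0 + b_y1|] and [Q_y = |b_y0 - b_y1|], regrouping and Cauchy-Schwarz give
    [2 S <= |u| (P_0 + Q_1) + |w| (P_1 + Q_0)].  The parallelogram law bounds
    [|u|^2 + |w|^2] and [P_y^2 + Q_y^2] by 4, so by Cauchy-Schwarz in the plane it suffices
    that [(P_0 + Q_1)^2 + (P_1 + Q_0)^2 <= S_q(k)^2].  The only nontrivial part is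
    [P_0 Q_1 + P_1 Q_0 <= 8 k sqrt(1 - k^2)] for [k <= 1/sqrt 2], a weighted AM-GM using
    [Q_y <= 2 k].  Equality is reached on the maximally entangled state by Bob observables
    in the x-z plane, for which the leakage constraint is tight when [k <= 1/sqrt 2]. *)

Lemma le_sqrt_mul_of_quadratic (R : rcfType) (x a b : R) :
  0 <= a -> 0 <= b -> (forall l, 2 * l * x <= l ^+ 2 * a + b) ->
  x <= Num.sqrt a * Num.sqrt b.
Proof.
move=> a0 b0 hq; have [x_le0|x_gt0] := lerP x 0.
  by apply: le_trans x_le0 _; rewrite mulr_ge0 ?sqrtr_ge0.
have [a_eq0|a_neq0] := eqVneq a 0.
  have := hq (b / x + 1); rewrite a_eq0 mulr0 add0r.
  have -> : 2 * (b / x + 1) * x = 2 * b + 2 * x by field; rewrite gt_eqF.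
  lra.
have a_gt0 : 0 < a by rewrite lt_def a_neq0.
have hx2 : x ^+ 2 <= a * b.
  have := hq (x / a).
  have -> : 2 * (x / a) * x = 2 * (x ^+ 2 / a) by field.
  have -> : (x / a) ^+ 2 * a = x ^+ 2 / a by field.
  move=> h; have : x ^+ 2 / a <= b by lra.
  by rewrite ler_pdivrMr // mulrC.
by rewrite -sqrtrM // -(gtr0_norm x_gt0) -sqrtr_sqr ler_sqrt // mulr_ge0.
Qed.

Section InnerProduct.
Variable R : rcfType.
Local Notation C := R[i].

Lemma adjmxM m n p (A : 'M[C]_(m, n)) (B : 'M[C]_(n, p)) :
  adjmx (A *m B) = adjmx B *m adjmx A.
Proof. by rewrite /adjmx map_mxM trmx_mul. Qed.

Lemma adjmxK m n (A : 'M[C]_(m, n)) : adjmx (adjmx A) = A.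
Proof. by apply/matrixP=> i j; rewrite !mxE conjCK. Qed.

Lemma adjmxD m n (A B : 'M[C]_(m, n)) : adjmx (A + B) = adjmx A + adjmx B.
Proof. by apply/matrixP=> i j; rewrite !mxE rmorphD. Qed.

Lemma adjmxB m n (A B : 'M[C]_(m, n)) : adjmx (A - B) = adjmx A - adjmx B.
Proof. by apply/matrixP=> i j; rewrite !mxE rmorphB. Qed.

Lemma adjmxZ m n c (A : 'M[C]_(m, n)) : adjmx (c *: A) = Num.conj c *: adjmx A.
Proof. by apply/matrixP=> i j; rewrite !mxE rmorphM. Qed.

Lemma adjmx1 n : adjmx (1%:M : 'M[C]_n) = 1%:M.
Proof. by apply/matrixP=> i j; rewrite !mxE rmorph_nat eq_sym. Qed.

Lemma adjmx_tens m n p q (A : 'M[C]_(m, n)) (B : 'M[C]_(p, q)) :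
  adjmx (A *t B) = adjmx A *t adjmx B.
Proof. by rewrite /adjmx map_mxT trmx_tens. Qed.

Definition inner n (u v : 'cV[C]_n) : C := (adjmx u *m v) 0 0.

Definition sqnorm n (v : 'cV[C]_n) : R := complex.Re (inner v v).

Lemma innerC n (u v : 'cV[C]_n) : inner v u = Num.conj (inner u v).
Proof.
have -> : Num.conj (inner u v) = adjmx (adjmx u *m v) 0 0 by rewrite /inner !mxE.
by rewrite adjmxM adjmxK.
Qed.

Lemma inner_mulmxl n (M : 'M[C]_n) (u v : 'cV[C]_n) :
  inner (M *m u) v = inner u (adjmx M *m v).
Proof. by rewrite /inner adjmxM mulmxA. Qed.

Lemma innerDl n (u v w : 'cV[C]_n) : inner (u + v) w = inner u w + inner v w.
Proof. by rewrite /inner adjmxD mulmxDl mxE. Qed.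

Lemma innerDr n (u v w : 'cV[C]_n) : inner w (u + v) = inner w u + inner w v.
Proof. by rewrite /inner mulmxDr mxE. Qed.

Lemma innerBl n (u v w : 'cV[C]_n) : inner (u - v) w = inner u w - inner v w.
Proof. by rewrite /inner adjmxB mulmxBl !mxE. Qed.

Lemma innerBr n (u v w : 'cV[C]_n) : inner w (u - v) = inner w u - inner w v.
Proof. by rewrite /inner mulmxBr !mxE. Qed.

Lemma innerZl n c (u w : 'cV[C]_n) : inner (c *: u) w = Num.conj c * inner u w.
Proof. by rewrite /inner adjmxZ -scalemxAl mxE. Qed.

Lemma innerZr n c (u w : 'cV[C]_n) : inner w (c *: u) = c * inner w u.
Proof. by rewrite /inner -scalemxAr mxE. Qed.

Lemma inner_self_ge0 n (v : 'cV[C]_n) : 0 <= inner v v.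
Proof.
rewrite /inner !mxE; apply: sumr_ge0 => i _; rewrite !mxE mulrC.
exact: mul_conjC_ge0.
Qed.

Lemma inner_selfE n (v : 'cV[C]_n) : inner v v = (sqnorm v)%:C.
Proof.
have := inner_self_ge0 v; rewrite /sqnorm; case: (inner v v) => a b.
by rewrite lecE /= => /andP[/eqP -> _].
Qed.

Lemma sqnorm_ge0 n (v : 'cV[C]_n) : 0 <= sqnorm v.
Proof. by rewrite -ler0c -inner_selfE inner_self_ge0. Qed.

Lemma vnorm_ge0 n (v : 'cV[C]_n) : 0 <= vnorm v.
Proof. exact: sqrtr_ge0. Qed.

Lemma vnorm_sqr n (v : 'cV[C]_n) : vnorm v ^+ 2 = sqnorm v.
Proof. exact/sqr_sqrtr/sqnorm_ge0. Qed.

Lemma Re_innerC n (u v : 'cV[C]_n) :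
  complex.Re (inner v u) = complex.Re (inner u v).
Proof. by rewrite innerC; case: (inner u v). Qed.

Lemma sqnormD n (u v : 'cV[C]_n) :
  sqnorm (u + v) = sqnorm u + sqnorm v + 2 * complex.Re (inner u v).
Proof. by rewrite /sqnorm innerDl !innerDr !raddfD /= Re_innerC; ring. Qed.

Lemma sqnormB n (u v : 'cV[C]_n) :
  sqnorm (u - v) = sqnorm u + sqnorm v - 2 * complex.Re (inner u v).
Proof. by rewrite /sqnorm innerBl !innerBr !raddfB /= Re_innerC; ring. Qed.

Lemma sqnorm_parallelogram n (u v : 'cV[C]_n) :
  sqnorm (u + v) + sqnorm (u - v) = 2 * sqnorm u + 2 * sqnorm v.
Proof. by rewrite sqnormD sqnormB; ring. Qed.

Lemma conjC_real (a : R) : Num.conj (a%:C) = a%:C.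
Proof. by apply/eqP; rewrite eq_complex /= oppr0 !eqxx. Qed.

Lemma Re_realM (a : R) (z : C) : complex.Re (a%:C * z) = a * complex.Re z.
Proof. by case: z => x y /=; rewrite mul0r subr0. Qed.

Lemma Re_inner_le n (u v : 'cV[C]_n) :
  complex.Re (inner u v) <= vnorm u * vnorm v.
Proof.
apply: le_sqrt_mul_of_quadratic; rewrite ?sqnorm_ge0 // => l.
have := sqnorm_ge0 (l%:C *: u - v).
rewrite sqnormB /sqnorm !innerZl !innerZr conjC_real mulrA -rmorphM /=.
by rewrite !Re_realM -/(sqnorm u) -/(sqnorm v) expr2; lra.
Qed.
End InnerProduct.

Section Observables.
Variable R : rcfType.
Local Notation C := R[i].

Lemma opnorm_leP n (M : 'M[C]_n) c : 0 <= c ->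
  opnorm_le M c <-> forall v, sqnorm (M *m v) <= c ^+ 2 * sqnorm v.
Proof.
move=> c0; have sq v :
    (vnorm (M *m v) <= c * vnorm v) = (sqnorm (M *m v) <= c ^+ 2 * sqnorm v).
  by rewrite -ler_sqr ?nnegrE ?mulr_ge0 ?vnorm_ge0 // exprMn !vnorm_sqr.
by split=> h v; [rewrite -sq | rewrite sq].
Qed.

Lemma psd_Re_inner_ge0 n (P : 'M[C]_n) w : psd P -> 0 <= complex.Re (inner w (P *m w)).
Proof. by case=> _ /(_ w); rewrite /inner mulmxA lecE => /andP[]. Qed.

Lemma binary_observable_hermitian n (O : 'M[C]_n) : binary_observable O -> adjmx O = O.
Proof. by case=> P0 [P1 [[h0 _] [h1 _] _ ->]]; rewrite adjmxB h0 h1. Qed.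

Lemma binary_observable_Re_inner n (O : 'M[C]_n) w : binary_observable O ->
  `|complex.Re (inner w (O *m w))| <= sqnorm w.
Proof.
case=> P0 [P1 [p0 p1 sumP ->]].
have := psd_Re_inner_ge0 w p0; have := psd_Re_inner_ge0 w p1.
have : sqnorm w = complex.Re (inner w (P0 *m w)) + complex.Re (inner w (P1 *m w)).
  by rewrite /sqnorm -raddfD -innerDr -mulmxDl sumP mul1mx.
by rewrite mulmxBl innerBr raddfB ler_norml; lra.
Qed.

Lemma Re_inner_polarization n (O : 'M[C]_n) u v : adjmx O = O ->
  complex.Re (inner (u + v) (O *m (u + v))) - complex.Re (inner (u - v) (O *m (u - v)))
  = 4 * complex.Re (inner u (O *m v)).
Proof.
move=> hO; have hvu : complex.Re (inner v (O *m u)) = complex.Re (inner u (O *m v)).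
  by rewrite -Re_innerC inner_mulmxl hO.
rewrite mulmxBr mulmxDr !(innerBl, innerBr) !(innerDl, innerDr) !(raddfB, raddfD) /= hvu.
ring.
Qed.

Lemma hermitian_opnorm_le1 n (O : 'M[C]_n) : adjmx O = O ->
  (forall w, `|complex.Re (inner w (O *m w))| <= sqnorm w) -> opnorm_le O 1.
Proof.
move=> hO hb; apply/opnorm_leP => // v; rewrite expr1n mul1r.
have hx : inner v (O *m (O *m v)) = inner (O *m v) (O *m v) by rewrite inner_mulmxl hO.
have := Re_inner_polarization v (O *m v) hO; rewrite hx -/(sqnorm (O *m v)).
have [lo _] := ler_normlP _ _ (hb (v - O *m v)).
have [_ hi] := ler_normlP _ _ (hb (v + O *m v)).
have := sqnorm_parallelogram v (O *m v).
lra.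
Qed.

Lemma binary_observable_opnorm_le1 n (O : 'M[C]_n) : binary_observable O -> opnorm_le O 1.
Proof.
move=> hO; apply: hermitian_opnorm_le1 => [|w].
  exact: binary_observable_hermitian.
exact: binary_observable_Re_inner.
Qed.

Lemma hermitian_idempotent_psd n (P : 'M[C]_n) : adjmx P = P -> P *m P = P -> psd P.
Proof.
move=> hP hPP; split=> // v; rewrite -mulmxA -/(inner v (P *m v)).
by rewrite -{1}hPP -mulmxA -{1}hP -inner_mulmxl inner_self_ge0.
Qed.

Lemma psd_halfZ n (X : 'M[C]_n) : adjmx X = X -> X *m X = X *+ 2 -> psd (2^-1 *: X).
Proof.
move=> hX hXX; apply: hermitian_idempotent_psd.
  by rewrite adjmxZ hX fmorphV rmorph_nat.
rewrite -scalemxAl -scalemxAr scalerA hXX -scalerMnr scalerMnl.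
by congr (_ *: _); rewrite -mulr_natr; field.
Qed.

Lemma involution_binary_observable n (O : 'M[C]_n) :
  adjmx O = O -> O *m O = 1%:M -> binary_observable O.
Proof.
move=> hO hOO; exists (2^-1 *: (1%:M + O)), (2^-1 *: (1%:M - O)); split.
- apply: psd_halfZ; first by rewrite adjmxD adjmx1 hO.
  by rewrite mulmxDl !mulmxDr !mul1mx mulmx1 hOO mulr2n [O + _]addrC.
- apply: psd_halfZ; first by rewrite adjmxB adjmx1 hO.
  by rewrite mulmxBl !mulmxBr !mul1mx mulmx1 hOO mulr2n opprB.
- rewrite -scalerDr addrACA subrr addr0 -mulr2n -scalerMnr scalerMnl -mulr_natr.
  by rewrite mulVf ?pnatr_eq0 ?scale1r.
- rewrite -scalerBr opprB addrC addrA subrK -mulr2n -scalerMnr scalerMnl -mulr_natr.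
  by rewrite mulVf ?pnatr_eq0 ?scale1r.
Qed.

Lemma opnorm_le_scalar_sqr n (M : 'M[C]_n) (d c : R) :
  adjmx M = M -> M *m M = d%:C *: 1%:M -> 0 <= c -> d <= c ^+ 2 -> opnorm_le M c.
Proof.
move=> hM hMM c0 dc; apply/opnorm_leP => // v.
rewrite /sqnorm inner_mulmxl hM mulmxA hMM -scalemxAl mul1mx innerZr Re_realM.
by rewrite ler_wpM2r // sqnorm_ge0.
Qed.

End Observables.

Section TensorWithIdentity.
Variable R : rcfType.
Local Notation C := R[i].

Lemma sum_mxtens_index (V : nmodType) m n (F : 'I_(m * n) -> V) :
  \sum_k F k = \sum_(i < m) \sum_(j < n) F (mxtens_index (i, j)).
Proof.
rewrite pair_big /= (reindex (@mxtens_index m n)) /=; last first.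
  by exists (@mxtens_unindex m n) => x _; rewrite (mxtens_indexK, mxtens_unindexK).
by apply: eq_bigr => -[i j] _.
Qed.

Definition tens_fiberr m n (w : 'cV[C]_(m * n)) (i : 'I_m) : 'cV[C]_n :=
  \col_j w (mxtens_index (i, j)) 0.

Definition tens_fiberl m n (w : 'cV[C]_(m * n)) (j : 'I_n) : 'cV[C]_m :=
  \col_i w (mxtens_index (i, j)) 0.

Lemma sqnormE n (v : 'cV[C]_n) : sqnorm v = \sum_i complex.Re (Num.conj (v i 0) * v i 0).
Proof. by rewrite /sqnorm /inner mxE raddf_sum; apply: eq_bigr => i _; rewrite !mxE. Qed.

Lemma sqnorm_fiberr m n (w : 'cV[C]_(m * n)) :
  sqnorm w = \sum_i sqnorm (tens_fiberr w i).
Proof.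
rewrite sqnormE sum_mxtens_index; apply: eq_bigr => i _.
by rewrite sqnormE; apply: eq_bigr => j _; rewrite !mxE.
Qed.

Lemma sqnorm_fiberl m n (w : 'cV[C]_(m * n)) :
  sqnorm w = \sum_j sqnorm (tens_fiberl w j).
Proof.
rewrite sqnormE sum_mxtens_index exchange_big; apply: eq_bigr => j _.
by rewrite sqnormE; apply: eq_bigr => i _; rewrite !mxE.
Qed.

Lemma tens_fiberr_mul m n (M : 'M[C]_n) (w : 'cV[C]_(m * n)) i :
  tens_fiberr (((1%:M : 'M_m) *t M) *m w) i = M *m tens_fiberr w i.
Proof.
apply/matrixP=> j k; rewrite [k]ord1 !mxE sum_mxtens_index (bigD1 i) //=.
rewrite [X in _ + X]big1 ?addr0 => [|i' ne_i'i]; last first.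
  by apply: big1 => j' _; rewrite tensmxE mxE eq_sym (negbTE ne_i'i) !mul0r.
by apply: eq_bigr => j' _; rewrite tensmxE !mxE eqxx mul1r.
Qed.

Lemma tens_fiberl_mul m n (M : 'M[C]_m) (w : 'cV[C]_(m * n)) j :
  tens_fiberl ((M *t (1%:M : 'M_n)) *m w) j = M *m tens_fiberl w j.
Proof.
apply/matrixP=> i k; rewrite [k]ord1 !mxE sum_mxtens_index.
apply: eq_bigr => i' _; rewrite (bigD1 j) //= big1 ?addr0 => [|j' ne_j'j].
  by rewrite tensmxE !mxE eqxx mulr1.
by rewrite tensmxE mxE eq_sym (negbTE ne_j'j) mulr0 mul0r.
Qed.

Lemma opnorm_le_tens1mx m n (M : 'M[C]_n) c : 0 <= c ->
  opnorm_le M c -> opnorm_le ((1%:M : 'M_m) *t M) c.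
Proof.
move=> c0 /(opnorm_leP _ c0) hM; apply/(opnorm_leP _ c0) => w.
rewrite !sqnorm_fiberr mulr_sumr; apply: ler_sum => i _.
by rewrite tens_fiberr_mul.
Qed.

Lemma opnorm_le_tensmx1 m n (M : 'M[C]_m) c : 0 <= c ->
  opnorm_le M c -> opnorm_le (M *t (1%:M : 'M_n)) c.
Proof.
move=> c0 /(opnorm_leP _ c0) hM; apply/(opnorm_leP _ c0) => w.
rewrite !sqnorm_fiberl mulr_sumr; apply: ler_sum => j _.
by rewrite tens_fiberl_mul.
Qed.
End TensorWithIdentity.

Section ScalarBound.
Variable R : rcfType.

Lemma cross_term_le (k s P1 Q1 P2 Q2 : R) :
  0 <= k <= s -> k ^+ 2 + s ^+ 2 = 1 ->
  P1 ^+ 2 + Q1 ^+ 2 <= 4 -> P2 ^+ 2 + Q2 ^+ 2 <= 4 ->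
  0 <= Q1 <= 2 * k -> 0 <= Q2 <= 2 * k ->
  P1 * Q2 + P2 * Q1 <= 8 * k * s.
Proof.
move=> /andP[k0 ks] ks1 hPQ1 hPQ2 /andP[Q10 Q1k] /andP[Q20 Q2k].
have [k_eq0|k_neq0] := eqVneq k 0.
  rewrite k_eq0 mulr0 in Q1k Q2k *.
  have -> : Q1 = 0 by lra.
  have -> : Q2 = 0 by lra.
  by rewrite !mulr0 mul0r addr0.
have k_gt0 : 0 < k by rewrite lt0r k_neq0.
have ks_gt0 : 0 < k * s by apply: mulr_gt0 => //; lra.
(* AM-GM weighted so as to be tight at [P = 2 s] and [Q = 2 k]. *)
have amgm1 : 2 * k * s * (P1 * Q2) <= k ^+ 2 * P1 ^+ 2 + s ^+ 2 * Q2 ^+ 2.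
  by have := sqr_ge0 (k * P1 - s * Q2); rewrite sqrrB !exprMn; lra.
have amgm2 : 2 * k * s * (P2 * Q1) <= k ^+ 2 * P2 ^+ 2 + s ^+ 2 * Q1 ^+ 2.
  by have := sqr_ge0 (k * P2 - s * Q1); rewrite sqrrB !exprMn; lra.
have hk2 : 0 <= k ^+ 2 := sqr_ge0 k.
have hP : k ^+ 2 * (P1 ^+ 2 + P2 ^+ 2) <= k ^+ 2 * (8 - Q1 ^+ 2 - Q2 ^+ 2).
  by apply: ler_wpM2l => //; lra.
have hQ : (s ^+ 2 - k ^+ 2) * (Q1 ^+ 2 + Q2 ^+ 2) <= (s ^+ 2 - k ^+ 2) * (8 * k ^+ 2).
  apply: ler_wpM2l; first by rewrite subr_ge0 ler_sqr ?nnegrE //; lra.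
  by rewrite !expr2; nra.
have : (k * s) * (P1 * Q2 + P2 * Q1) <= (k * s) * (8 * k * s).
  rewrite -(ler_pM2l (ltr0n R 2)); move: amgm1 amgm2 hP hQ ks1.
  by rewrite !expr2; nra.
by rewrite ler_pM2l.
Qed.

Lemma le_inv_sqrt2 (k : R) : 0 <= k -> (k <= (Num.sqrt 2)^-1) = (2 * k ^+ 2 <= 1).
Proof.
move=> k0; rewrite -ler_sqr ?nnegrE ?invr_ge0 ?sqrtr_ge0 // exprVn sqr_sqrtr ?ler0n //.
by rewrite -(ler_pM2l (ltr0n R 2)) divff ?pnatr_eq0.
Qed.

Lemma S_q_ge0 (k : R) : 0 <= k -> 0 <= S_q k.
Proof.
move=> k0; rewrite /S_q; case: ifP => _; last by rewrite ler0n.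
by apply: mulr_ge0; [apply: mulr_ge0 | apply: addr_ge0]; rewrite ?sqrtr_ge0 ?ler0n.
Qed.

Lemma sqr_add_le_S_q (k P1 Q1 P2 Q2 : R) : 0 <= k -> k < 1 ->
  P1 ^+ 2 + Q1 ^+ 2 <= 4 -> P2 ^+ 2 + Q2 ^+ 2 <= 4 ->
  0 <= Q1 <= 2 * k -> 0 <= Q2 <= 2 * k ->
  (P1 + Q2) ^+ 2 + (P2 + Q1) ^+ 2 <= S_q k ^+ 2.
Proof.
move=> k0 k1 hPQ1 hPQ2 hQ1 hQ2.
have -> : (P1 + Q2) ^+ 2 + (P2 + Q1) ^+ 2 =
    (P1 ^+ 2 + Q1 ^+ 2) + (P2 ^+ 2 + Q2 ^+ 2) + 2 * (P1 * Q2 + P2 * Q1) by ring.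
rewrite /S_q le_inv_sqrt2 //; case: ifP => hk; last first.
  have := sqr_ge0 (P1 - Q2); have := sqr_ge0 (P2 - Q1); rewrite !sqrrB.
  by rewrite (_ : (4 : R) ^+ 2 = 16); [lra | rewrite expr2 -natrM].
set s := Num.sqrt (1 - k ^+ 2).
have s2 : s ^+ 2 = 1 - k ^+ 2 by rewrite sqr_sqrtr // subr_ge0 expr_le1 // ltW.
have ks : 0 <= k <= s.
  by rewrite k0 /= -ler_sqr ?nnegrE ?sqrtr_ge0 // s2; lra.
have ks1 : k ^+ 2 + s ^+ 2 = 1 by rewrite s2; ring.
have := cross_term_le ks ks1 hPQ1 hPQ2 hQ1 hQ2.
have -> : (2 * Num.sqrt 2 * (k + s)) ^+ 2 = 8 * (k ^+ 2 + s ^+ 2) + 16 * (k * s).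
  by rewrite !exprMn sqr_sqrtr ?ler0n //; ring.
by rewrite ks1; lra.
Qed.

Lemma cauchy_schwarz2_le (U W x y M : R) :
  U ^+ 2 + W ^+ 2 <= 4 -> x ^+ 2 + y ^+ 2 <= M ^+ 2 -> 0 <= M -> U * x + W * y <= 2 * M.
Proof.
move=> hUW hxy M0; have := sqr_ge0 (U * y - W * x).
have : (U ^+ 2 + W ^+ 2) * (x ^+ 2 + y ^+ 2) <= 4 * M ^+ 2.
  by apply: ler_pM; rewrite ?addr_ge0 ?sqr_ge0.
by rewrite !expr2; nra.
Qed.
End ScalarBound.

Section UpperBound.
Variable R : rcfType.
Local Notation C := R[i].

Lemma sqnorm_le1 n (v : 'cV[C]_n) : vnorm v <= 1 -> sqnorm v <= 1.
Proof. by rewrite -vnorm_sqr => h; rewrite expr_le1 ?vnorm_ge0. Qed.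

Lemma vnorm_parallelogram_le4 n (u v : 'cV[C]_n) : vnorm u <= 1 -> vnorm v <= 1 ->
  vnorm (u + v) ^+ 2 + vnorm (u - v) ^+ 2 <= 4.
Proof.
move=> /sqnorm_le1 hu /sqnorm_le1 hv.
by rewrite !vnorm_sqr sqnorm_parallelogram; lra.
Qed.

Lemma Re_inner_leaky_chsh_le n (k : R) (a0 a1 b00 b10 b01 b11 : 'cV[C]_n) :
  0 <= k -> k < 1 ->
  vnorm a0 <= 1 -> vnorm a1 <= 1 ->
  vnorm b00 <= 1 -> vnorm b10 <= 1 -> vnorm b01 <= 1 -> vnorm b11 <= 1 ->
  vnorm (b00 - b01) <= 2 * k -> vnorm (b10 - b11) <= 2 * k ->
  complex.Re (inner a0 b00 + inner a0 b10 + inner a1 b01 - inner a1 b11) <= S_q k.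
Proof.
move=> k0 k1 ha0 ha1 hb00 hb10 hb01 hb11 hd0 hd1.
set u := a0 + a1; set w := a0 - a1.
have regroup : 2 * complex.Re (inner a0 b00 + inner a0 b10 + inner a1 b01 - inner a1 b11) =
    complex.Re (inner u (b00 + b01)) + complex.Re (inner u (b10 - b11))
  + (complex.Re (inner w (b10 + b11)) + complex.Re (inner w (b00 - b01))).
  rewrite /u /w !(innerBl, innerBr) !(innerDl, innerDr) !(raddfB, raddfD) /=; ring.
have cs : complex.Re (inner u (b00 + b01)) + complex.Re (inner u (b10 - b11))
    + (complex.Re (inner w (b10 + b11)) + complex.Re (inner w (b00 - b01)))
    <= vnorm u * (vnorm (b00 + b01) + vnorm (b10 - b11))
     + vnorm w * (vnorm (b10 + b11) + vnorm (b00 - b01)).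
  by rewrite !mulrDr; apply: lerD; apply: lerD; apply: Re_inner_le.
have hQ0 : 0 <= vnorm (b00 - b01) <= 2 * k by rewrite vnorm_ge0 hd0.
have hQ1 : 0 <= vnorm (b10 - b11) <= 2 * k by rewrite vnorm_ge0 hd1.
rewrite -(ler_pM2l (ltr0n R 2)) regroup; apply: le_trans cs _.
apply: cauchy_schwarz2_le (vnorm_parallelogram_le4 ha0 ha1) _ (S_q_ge0 k0).
exact: sqr_add_le_S_q k0 k1 (vnorm_parallelogram_le4 hb00 hb01)
  (vnorm_parallelogram_le4 hb10 hb11) hQ0 hQ1.
Qed.

Lemma tensmxBr m n p q (A : 'M[C]_(m, n)) (X Y : 'M[C]_(p, q)) :
  A *t (X - Y) = A *t X - A *t Y.
Proof. by apply/matrixP=> i j; rewrite !mxE mulrBr. Qed.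

Lemma expectE n (psi : 'cV[C]_n) H : expect psi H = inner psi (H *m psi).
Proof. by rewrite /expect /inner mulmxA. Qed.

Lemma expect_tens m n (psi : 'cV[C]_(m * n)) (A : 'M[C]_m) (B : 'M[C]_n) :
  adjmx A = A ->
  expect psi (A *t B) = inner ((A *t 1%:M) *m psi) ((1%:M *t B) *m psi).
Proof.
by move=> hA; rewrite expectE tensmx_decr -mulmxA inner_mulmxl adjmx_tens hA adjmx1.
Qed.

Lemma expect_real n (psi : 'cV[C]_n) H : adjmx H = H -> expect psi H \is Num.real.
Proof. by move=> hH; rewrite CrealE expectE -innerC inner_mulmxl hH. Qed.

Lemma S_val_real m n (psi : 'cV[C]_(m * n)) (A0 A1 : 'M[C]_m)
    (B : bool -> bool -> 'M[C]_n) :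
  adjmx A0 = A0 -> adjmx A1 = A1 -> (forall y x, adjmx (B y x) = B y x) ->
  S_val psi A0 A1 B \is Num.real.
Proof.
move=> hA0 hA1 hB; have hE A y x : adjmx A = A -> expect psi (A *t B y x) \is Num.real.
  by move=> hA; apply: expect_real; rewrite adjmx_tens hA hB.
by rewrite rpredB ?rpredD ?hE.
Qed.

Lemma unit_vector_vnorm n (psi : 'cV[C]_n) : unit_vector psi -> vnorm psi = 1.
Proof. by rewrite /unit_vector /vnorm => ->; rewrite sqrtr1. Qed.

Lemma S_val_le_S_q (k : R) m n (psi : 'cV[C]_(m * n)) (A0 A1 : 'M[C]_m)
    (B : bool -> bool -> 'M[C]_n) :
  0 <= k -> k < 1 -> unit_vector psi ->
  binary_observable A0 -> binary_observable A1 ->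
  (forall y x, binary_observable (B y x)) ->
  (forall y, opnorm_le (B y false - B y true) (2 * k)) ->
  S_val psi A0 A1 B <= (S_q k)%:C.
Proof.
move=> k0 k1 /unit_vector_vnorm psi1 hA0 hA1 hB hD.
have hA0' := binary_observable_hermitian hA0.
have hA1' := binary_observable_hermitian hA1.
have hB' y x := binary_observable_hermitian (hB y x).
have k2 : 0 <= 2 * k by rewrite mulr_ge0.
have contract (M : 'M[C]_(m * n)) c : 0 <= c -> opnorm_le M c -> vnorm (M *m psi) <= c.
  by move=> c0 /(_ psi); rewrite psi1 mulr1.
have hApsi A : binary_observable A -> vnorm ((A *t 1%:M) *m psi) <= 1.
  move=> hA; apply: contract ler01 _; apply: opnorm_le_tensmx1 ler01 _.
  exact: binary_observable_opnorm_le1.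
have hBpsi y x : vnorm ((1%:M *t B y x) *m psi) <= 1.
  apply: contract ler01 _; apply: opnorm_le_tens1mx ler01 _.
  exact: binary_observable_opnorm_le1.
have hDpsi y : vnorm ((1%:M *t B y false) *m psi - (1%:M *t B y true) *m psi) <= 2 * k.
  rewrite -mulmxBl -tensmxBr; apply: (contract _ _ k2).
  exact: opnorm_le_tens1mx k2 (hD y).
rewrite -(RRe_real (S_val_real psi hA0' hA1' hB')) lecR /S_val !expect_tens //.
exact: (Re_inner_leaky_chsh_le k0 k1 (hApsi _ hA0) (hApsi _ hA1)
  (hBpsi _ _) (hBpsi _ _) (hBpsi _ _) (hBpsi _ _) (hDpsi _) (hDpsi _)).
Qed.
End UpperBound.

Section MaximallyEntangled.
Variable R : rcfType.
Local Notation C := R[i].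

Lemma inner_tens m n (x u : 'cV[C]_m) (y v : 'cV[C]_n) :
  inner (x *t y) (u *t v) = inner x u * inner y v.
Proof.
rewrite /inner (adjmx_tens x y) (tensmx_mul (adjmx x) (adjmx y) u v) mxE.
by rewrite !(ord1 (mxtens_unindex _).1) !(ord1 (mxtens_unindex _).2).
Qed.

Lemma inner_delta_mul n (A : 'M[C]_n) i j :
  inner (delta_mx i 0) (A *m delta_mx j 0) = A i j.
Proof.
rewrite /inner -colE mxE (bigD1 i) //= big1 ?addr0 => [|k ne_ki]; rewrite !mxE ?eqxx.
  by rewrite rmorph1 mul1r.
by rewrite (negbTE ne_ki) rmorph0 mul0r.
Qed.

Lemma expect_phi_plus (A B : 'M[C]_2) : expect (phi_plus R) (A *t B) =
  (2^-1)%:C * (A 0 0 * B 0 0 + A 0 1 * B 0 1 + A 1 0 * B 1 0 + A 1 1 * B 1 1).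
Proof.
have e i j : inner (ket R i *t ket R i) ((A *t B) *m (ket R j *t ket R j)) = A i j * B i j.
  by rewrite (tensmx_mul A B) inner_tens !inner_delta_mul.
rewrite expectE /phi_plus -scalemxAr innerZl innerZr innerDl !mulmxDr !innerDr !e.
rewrite conjC_real mulrA -rmorphM /= -invfM -expr2 sqr_sqrtr ?ler0n //.
by rewrite !addrA.
Qed.

Lemma unit_vector_phi_plus : unit_vector (phi_plus R).
Proof.
have e i j : inner (ket R i *t ket R i) (ket R j *t ket R j) = (i == j)%:R.
  by rewrite inner_tens -(mul1mx (ket R j)) inner_delta_mul mxE -natrM mulnb andbb.
rewrite /unit_vector -/(inner _ _) /phi_plus innerZl innerZr innerDl !innerDr !e /=.
rewrite conjC_real mulrA -rmorphM /= -invfM -expr2 sqr_sqrtr ?ler0n //.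
by rewrite addr0 add0r -mulr2n fmorphV rmorph_nat mulVf ?pnatr_eq0.
Qed.
End MaximallyEntangled.

Section Pauli.
Variable R : rcfType.
Local Notation C := R[i].

Definition pauli_xz (a b : R) : 'M[C]_2 := a%:C *: sigma_x R + b%:C *: sigma_z R.

Lemma ord2_cases (i : 'I_2) : i = 0 \/ i = 1.
Proof. by case: i => [[|[|//]] ?]; [left | right]; apply: val_inj. Qed.

Lemma adjmx_sigma_x : adjmx (sigma_x R) = sigma_x R.
Proof. by apply/matrixP=> i j; rewrite !mxE rmorph_nat eq_sym. Qed.

Lemma adjmx_sigma_z : adjmx (sigma_z R) = sigma_z R.
Proof.
apply/matrixP=> i j; rewrite !mxE.
by case: (ord2_cases i) => ->; case: (ord2_cases j) => ->;
  rewrite /= ?rmorph0 ?rmorphN ?rmorph1.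
Qed.

Lemma adjmx_pauli_xz a b : adjmx (pauli_xz a b) = pauli_xz a b.
Proof. by rewrite adjmxD !adjmxZ !conjC_real adjmx_sigma_x adjmx_sigma_z. Qed.

Lemma pauli_xz_sqr a b : pauli_xz a b *m pauli_xz a b = (a ^+ 2 + b ^+ 2)%:C *: 1%:M.
Proof.
apply/matrixP=> i j; rewrite !mxE !big_ord_recl big_ord0 !mxE.
by case: (ord2_cases i) => ->; case: (ord2_cases j) => ->;
  rewrite /= rmorphD !rmorphXn; ring.
Qed.

Lemma pauli_xzB a b a' b' : pauli_xz a b - pauli_xz a' b' = pauli_xz (a - a') (b - b').
Proof. by apply/matrixP=> i j; rewrite !mxE !rmorphB; ring. Qed.

Lemma pauli_xz10 : pauli_xz 1 0 = sigma_x R.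
Proof. by rewrite /pauli_xz rmorph0 rmorph1 scale0r addr0 scale1r. Qed.

Lemma pauli_xz01 : pauli_xz 0 1 = sigma_z R.
Proof. by rewrite /pauli_xz rmorph0 rmorph1 scale0r add0r scale1r. Qed.

Lemma binary_observable_pauli_xz a b :
  a ^+ 2 + b ^+ 2 = 1 -> binary_observable (pauli_xz a b).
Proof.
move=> hab; apply: involution_binary_observable; first exact: adjmx_pauli_xz.
by rewrite pauli_xz_sqr hab rmorph1 scale1r.
Qed.

Lemma opnorm_le_pauli_xz a b c : 0 <= c -> a ^+ 2 + b ^+ 2 <= c ^+ 2 ->
  opnorm_le (pauli_xz a b) c.
Proof. exact/opnorm_le_scalar_sqr/pauli_xz_sqr/adjmx_pauli_xz. Qed.

Lemma expect_phi_plus_sigma_z a b : expect (phi_plus R) (sigma_z R *t pauli_xz a b) = b%:C.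
Proof. by rewrite expect_phi_plus !mxE /=; field. Qed.

Lemma expect_phi_plus_sigma_x a b : expect (phi_plus R) (sigma_x R *t pauli_xz a b) = a%:C.
Proof. by rewrite expect_phi_plus !mxE /=; field. Qed.
End Pauli.

Section Optimal.
Variable R : rcfType.
Local Notation C := R[i].

Definition B_family (c d : R) (y x : bool) : 'M[C]_2 :=
  match y, x with
  | false, false => pauli_xz d c
  | false, true => pauli_xz c d
  | true, false => pauli_xz (- d) c
  | true, true => pauli_xz (- c) d
  end.

(* When [k <= 1/sqrt 2], [c - d = sqrt 2 k], so that the leakage constraint is tight. *)
Definition B_opt_coef (k : R) : R * R :=
  let s := Num.sqrt (1 - k ^+ 2) in
  let r := Num.sqrt 2 in
  if k <= r^-1 then ((k + s) / r, (- k + s) / r) else (1, 0).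

Lemma B_optE k y x : B_opt k y x = B_family (B_opt_coef k).1 (B_opt_coef k).2 y x.
Proof.
rewrite /B_opt /B_opt_coef; case: ifP => _; case: y; case: x => /=.
- by rewrite /pauli_xz -(mulNr (k + _)) opprD.
- by rewrite /pauli_xz -(mulNr (- k + _)) opprD opprK.
- by rewrite /pauli_xz.
- by rewrite /pauli_xz.
- by rewrite /pauli_xz !rmorphN rmorph1 rmorph0 scale0r !addr0 scaleN1r.
- by rewrite oppr0 pauli_xz01.
- by rewrite pauli_xz10.
- by rewrite pauli_xz01.
Qed.

Lemma binary_observable_B_family c d y x : c ^+ 2 + d ^+ 2 = 1 ->
  binary_observable (B_family c d y x).
Proof.
by move=> cd1; case: y; case: x; apply: binary_observable_pauli_xz; rewrite ?sqrrN // addrC.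
Qed.

Lemma opnorm_le_B_family c d e y : 0 <= e -> 2 * (c - d) ^+ 2 <= e ^+ 2 ->
  opnorm_le (B_family c d y false - B_family c d y true) e.
Proof.
move=> e0 hcd; case: y; rewrite /= pauli_xzB; apply: opnorm_le_pauli_xz => //.
  by rewrite opprK addrC; lra.
by rewrite -opprB sqrrN; lra.
Qed.

Lemma S_val_B_family c d :
  S_val (phi_plus R) (sigma_z R) (sigma_x R) (B_family c d) = (4 * c)%:C.
Proof.
have -> : S_val (phi_plus R) (sigma_z R) (sigma_x R) (B_family c d) =
    c%:C + c%:C + c%:C - (- c)%:C.
  rewrite /S_val; cbn [B_family]; congr (_ + _ + _ - _);
    [exact: expect_phi_plus_sigma_z | exact: expect_phi_plus_sigma_z
    | exact: expect_phi_plus_sigma_x | exact: expect_phi_plus_sigma_x].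
by rewrite -!rmorphD -rmorphB; congr (_%:C); ring.
Qed.

Lemma B_opt_coef_spec k : 0 <= k -> k < 1 ->
  [/\ (B_opt_coef k).1 ^+ 2 + (B_opt_coef k).2 ^+ 2 = 1,
      2 * ((B_opt_coef k).1 - (B_opt_coef k).2) ^+ 2 <= (2 * k) ^+ 2
    & 4 * (B_opt_coef k).1 = S_q k].
Proof.
move=> k0 k1; rewrite /B_opt_coef /S_q le_inv_sqrt2 //.
have r2 : Num.sqrt 2 ^+ 2 = 2 :> R by rewrite sqr_sqrtr ?ler0n.
have r_neq0 : Num.sqrt 2 != 0 :> R by rewrite sqrtr_eq0 -ltNge ltr0n.
case: ifP => hk /=; last first.
  move/negbT: hk; rewrite -ltNge => hk.
  split; rewrite ?expr1n ?expr0n ?addr0 ?subr0 ?mulr1 //.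
  by rewrite exprMn (_ : (2 : R) ^+ 2 = 2 * 2) ?expr2 //; lra.
set r := Num.sqrt 2; set s := Num.sqrt (1 - k ^+ 2).
have s2 : s ^+ 2 = 1 - k ^+ 2 by rewrite sqr_sqrtr // subr_ge0 expr_le1 // ltW.
split.
- have -> : ((k + s) / r) ^+ 2 + ((- k + s) / r) ^+ 2 = k ^+ 2 + s ^+ 2.
    by rewrite !expr_div_n r2; field.
  by rewrite s2 addrC subrK.
- have -> : 2 * ((k + s) / r - (- k + s) / r) ^+ 2 = (2 * k) ^+ 2.
    by rewrite -mulrBl expr_div_n r2; field.
  exact: lexx.
- have -> : (4 : R) = 2 * r ^+ 2 by rewrite r2 -natrM.
  by rewrite expr2; field.
Qed.

Lemma B_opt_attains k : 0 <= k -> k < 1 ->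
  [/\ unit_vector (phi_plus R),
      binary_observable (sigma_z R) /\ binary_observable (sigma_x R),
      (forall y x, binary_observable (B_opt k y x)),
      (forall y, opnorm_le (B_opt k y false - B_opt k y true) (2 * k))
    & S_val (phi_plus R) (sigma_z R) (sigma_x R) (B_opt k) = (S_q k)%:C].
Proof.
move=> k0 k1; have [cd1 cd_gap cdS] := B_opt_coef_spec k0 k1.
split.
- exact: unit_vector_phi_plus.
- by rewrite -pauli_xz01 -pauli_xz10; split; apply: binary_observable_pauli_xz;
    rewrite expr0n expr1n ?addr0 ?add0r.
- by move=> y x; rewrite B_optE; apply: binary_observable_B_family.
- by move=> y; rewrite !B_optE; apply: opnorm_le_B_family; rewrite ?mulr_ge0.
- by rewrite /S_val !B_optE -/(S_val _ _ _ (B_family _ _)) S_val_B_family cdS.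
Qed.
End Optimal.

Theorem mainTheorem10 (R : rcfType) (k : R) (hk0 : 0 <= k) (hk1 : k < 1) :
  (forall (m n : nat) (psi : 'cV[R[i]]_(m * n)) (A0 A1 : 'M[R[i]]_m)
          (B : bool -> bool -> 'M[R[i]]_n),
      unit_vector psi ->
      binary_observable A0 -> binary_observable A1 ->
      (forall y x, binary_observable (B y x)) ->
      (forall y, opnorm_le (B y false - B y true) (2 * k)) ->
      S_val psi A0 A1 B <= (S_q k)%:C)
  /\
  [/\ unit_vector (phi_plus R),
      binary_observable (sigma_z R) /\ binary_observable (sigma_x R),
      (forall y x, binary_observable (B_opt k y x)),
      (forall y, opnorm_le (B_opt k y false - B_opt k y true) (2 * k))
    & S_val (phi_plus R) (sigma_z R) (sigma_x R) (B_opt k) = (S_q k)%:C].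
Proof.
split; last exact: B_opt_attains.
by move=> m n psi A0 A1 B; apply: S_val_le_S_q.
Qed.
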